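(* Let $f^+:[0,1]\to[0,1]$ be monotonically non-decreasing and piecewise convex, $f^-:[0,1]\to[0,1]$ monotonically non-decreasing and piecewise concave, and $f^\circ:[0,1]\to[0,1]$ monotonically non-decreasing. Let $A^+$ be the set of endpoints of the convex pieces of $f^+$ and $A^-$ the set of endpoints of the concave pieces of $f^-$ (so $\{0,1\}\subseteq A^+$ and $\{0,1\}\subseteq A^-$). Fix $\alpha>0$ and a sign pattern $(s_{uv},s_{vw},s_{uw})\in\{+,-,\varnothing\}^3$. If $\alpha LP(uvw)-ALG(uvw)<0$ for some edge lengths $(x^*_{uv},x^*_{vw},x^*_{uw})\in[0,1]^3$ satisfying the triangle inequalities, then there exist edge lengths $(x_{uv},x_{vw},x_{uw})\in[0,1]^3$ satisfying the triangle inequalities with $\alpha LP(uvw)-ALG(uvw)<0$ such that either (1) one of the triangle inequalities holds with equality, or (2) the lengths of all positive edges lie in $A^+$, the lengths of all negative edges lie in $A^-$, and the lengths of all neutral edges lie in $\{0,1\}$.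
   Context: A triangle $uvw$ has three pairs $uv,vw,uw$, each with a sign $s_e\in\{+,-,\varnothing\}$ (positive edge, negative edge, or neutral/no edge) and a length $x_e\in[0,1]$; the triangle inequalities are $x_{uv}\le x_{vw}+x_{uw}$, $x_{vw}\le x_{uv}+x_{uw}$, $x_{uw}\le x_{uv}+x_{vw}$. Let $p_e=f^{s_e}(x_e)$, where $f^{\varnothing}=f^\circ$. For a pair $(u,v)$ with third vertex $w$: $e.cost_w(u,v)=p_{uw}(1-p_{vw})+(1-p_{uw})p_{vw}$ if $s_{uv}=+$, $(1-p_{uw})(1-p_{vw})$ if $s_{uv}=-$, $0$ if $s_{uv}=\varnothing$; $e.lp_w(u,v)=(1-p_{uw}p_{vw})x_{uv}$ if $s_{uv}=+$, $(1-p_{uw}p_{vw})(1-x_{uv})$ if $s_{uv}=-$, $0$ if $s_{uv}=\varnothing$. Then $ALG(uvw)=e.cost_w(u,v)+e.cost_v(w,u)+e.cost_u(v,w)$ and $LP(uvw)=e.lp_w(u,v)+e.lp_v(w,u)+e.lp_u(v,w)$. *)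

From Stdlib Require Import Reals Lra List Sorted.
Import ListNotations.
Open Scope R_scope.

Inductive esign := Pos | Neg | Neu.

Definition in01 (x : R) : Prop := 0 <= x <= 1.

Definition mono01 (f : R -> R) : Prop :=
  (forall x, in01 x -> in01 (f x)) /\
  (forall x y, in01 x -> in01 y -> x <= y -> f x <= f y).

Definition convex_on (f : R -> R) (a b : R) : Prop :=
  forall x y t, a <= x <= b -> a <= y <= b -> 0 <= t <= 1 ->
    f (t * x + (1 - t) * y) <= t * f x + (1 - t) * f y.

Definition concave_on (f : R -> R) (a b : R) : Prop :=
  forall x y t, a <= x <= b -> a <= y <= b -> 0 <= t <= 1 ->
    t * f x + (1 - t) * f y <= f (t * x + (1 - t) * y).

(* A = [a_0; ...; a_k] with 0 = a_0 < a_1 < ... < a_k = 1 is a decomposition of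
   [0,1] into pieces [a_i, a_{i+1}] on each of which f has property P;
   A is the set of endpoints of the pieces. *)
Definition piecewise (P : (R -> R) -> R -> R -> Prop) (f : R -> R) (A : list R) : Prop :=
  Sorted Rlt A /\ hd_error A = Some 0 /\ last A 0 = 1 /\
  forall i, (S i < length A)%nat -> P f (nth i A 0) (nth (S i) A 0).

Definition piecewise_convex := piecewise convex_on.
Definition piecewise_concave := piecewise concave_on.

Definition pval (fp fm fo : R -> R) (s : esign) (x : R) : R :=
  match s with Pos => fp x | Neg => fm x | Neu => fo x end.

(* e.cost_w(u,v) for pair uv with sign s, where q1 = p_uw, q2 = p_vw *)
Definition ecost (s : esign) (q1 q2 : R) : R :=
  match s with
  | Pos => q1 * (1 - q2) + (1 - q1) * q2
  | Neg => (1 - q1) * (1 - q2)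
  | Neu => 0
  end.

(* e.lp_w(u,v) for pair uv with sign s and length x, where q1 = p_uw, q2 = p_vw *)
Definition elp (s : esign) (x q1 q2 : R) : R :=
  match s with
  | Pos => (1 - q1 * q2) * x
  | Neg => (1 - q1 * q2) * (1 - x)
  | Neu => 0
  end.

(* Edges: 1 = uv, 2 = vw, 3 = uw. *)
Definition ALG (fp fm fo : R -> R) (s1 s2 s3 : esign) (x1 x2 x3 : R) : R :=
  let p1 := pval fp fm fo s1 x1 in
  let p2 := pval fp fm fo s2 x2 in
  let p3 := pval fp fm fo s3 x3 in
  ecost s1 p3 p2 + ecost s2 p1 p3 + ecost s3 p1 p2.

Definition LP (fp fm fo : R -> R) (s1 s2 s3 : esign) (x1 x2 x3 : R) : R :=
  let p1 := pval fp fm fo s1 x1 in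
  let p2 := pval fp fm fo s2 x2 in
  let p3 := pval fp fm fo s3 x3 in
  elp s1 x1 p3 p2 + elp s2 x2 p1 p3 + elp s3 x3 p1 p2.

Definition tri_ineq (x1 x2 x3 : R) : Prop :=
  x1 <= x2 + x3 /\ x2 <= x1 + x3 /\ x3 <= x1 + x2.

Definition tight (x1 x2 x3 : R) : Prop :=
  x1 = x2 + x3 \/ x2 = x1 + x3 \/ x3 = x1 + x2.

Definition at_breakpoint (Ap Am : list R) (s : esign) (x : R) : Prop :=
  match s with
  | Pos => In x Ap
  | Neg => In x Am
  | Neu => x = 0 \/ x = 1
  end.

(* Fix two of the lengths. The defect alpha LP - ALG is then a*t + K*f(t) + c in
   the remaining length t, where f = f^s is the function attached to its sign and
   the slope a of the LP term is >= 0 for a positive edge, <= 0 for a negative edge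
   and 0 for a neutral one. Hence the defect is either monotone in t in the
   favourable direction, or concave on every piece of f; in both cases, if it is
   negative somewhere on the feasible interval |x2 - x3| <= t <= min(1, x2 + x3),
   it is negative at an end of that interval or at a breakpoint of f. The lower end
   and the upper end x2 + x3 make a triangle inequality tight, the upper end 1 is a
   breakpoint. Doing this for the three lengths in turn gives the theorem. *)

From Stdlib Require Import Reals List Lra Psatz.
Import ListNotations.
Open Scope R_scope.

Lemma In_last (l : list R) d : l <> [] -> In (last l d) l.
Proof.
  induction l as [|a l IH]; intros Hl; [congruence|].
  destruct l as [|b l]; [now left|].
  right; apply IH; discriminate.
Qed.

Lemma nth_bracket t (l : list R) a :
  l <> [] -> a <= t <= last (a :: l) 0 ->
  exists i, (S i < length (a :: l))%nat /\ nth i (a :: l) 0 <= t <= nth (S i) (a :: l) 0.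
Proof.
  revert a; induction l as [|b l IH]; intros a Hl Ht; [congruence|].
  destruct (Rle_or_lt t b) as [Hb|Hb].
  - exists 0%nat; simpl; split; [lia|lra].
  - destruct l as [|c l]; [simpl in Ht; lra|].
    destruct (IH b ltac:(discriminate) ltac:(simpl in *; lra)) as [i Hi].
    exists (S i); simpl in *; split; [lia | tauto].
Qed.

Section Piecewise.

Variables (P : (R -> R) -> R -> R -> Prop) (f : R -> R) (A : list R).
Hypothesis f_pw : piecewise P f A.

Lemma piecewise_In1 : In 1 A.
Proof.
  destruct f_pw as [_ [_ [Hlast _]]].
  rewrite <- Hlast; apply In_last; intros ->; simpl in Hlast; lra.
Qed.

Lemma piecewise_piece t : 0 <= t <= 1 ->
  exists i, (S i < length A)%nat /\ P f (nth i A 0) (nth (S i) A 0) /\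
            nth i A 0 <= t <= nth (S i) A 0.
Proof.
  intros Ht; destruct f_pw as [_ [Hhd [Hlast Hpieces]]].
  destruct A as [|a l]; [discriminate|].
  injection Hhd as ->.
  destruct (nth_bracket t l 0) as [i [Hi Hti]];
    [intros ->; simpl in Hlast; lra | rewrite Hlast; lra|].
  exists i; auto.
Qed.

End Piecewise.

Lemma piecewise_impl (P Q : (R -> R) -> R -> R -> Prop) f g A :
  (forall l u, P f l u -> Q g l u) -> piecewise P f A -> piecewise Q g A.
Proof. intros HPQ [Hs [Hhd [Hlast Hp]]]; repeat split; auto. Qed.

Lemma concave_on_min_endpoints h l u t :
  concave_on h l u -> l <= t <= u -> Rmin (h l) (h u) <= h t.
Proof.
  intros Hc Ht.
  destruct (Req_dec l u) as [<-|Hlu].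
  - replace t with l by lra; apply Rmin_l.
  - set (k := (u - t) / (u - l)).
    assert (Hk : 0 <= k <= 1).
    { assert (k * (u - l) = u - t) by (unfold k; field; lra).
      split; nra. }
    assert (Ht_comb : k * l + (1 - k) * u = t) by (unfold k; field; lra).
    pose proof (Hc l u k ltac:(lra) ltac:(lra) Hk) as Hcomb; rewrite Ht_comb in Hcomb.
    pose proof (Rmin_l (h l) (h u)); pose proof (Rmin_r (h l) (h u)).
    nra.
Qed.

Lemma concave_on_sub h a b l u :
  concave_on h a b -> a <= l -> u <= b -> concave_on h l u.
Proof. intros Hc Hl Hu x y k Hx Hy Hk; apply Hc; auto; lra. Qed.

Lemma piecewise_concave_neg_at_end_or_breakpoint h A L U t0 :
  piecewise concave_on h A -> 0 <= L -> L <= t0 <= U -> U <= 1 -> h t0 < 0 ->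
  exists t, L <= t <= U /\ h t < 0 /\ (t = L \/ t = U \/ In t A).
Proof.
  intros Hpw HL Ht0 HU Hneg.
  destruct (piecewise_piece _ _ _ Hpw t0 ltac:(lra)) as [i [Hi [Hconc Hti]]].
  assert (Ha : In (nth i A 0) A) by (apply nth_In; lia).
  assert (Hb : In (nth (S i) A 0) A) by (apply nth_In; lia).
  set (l := Rmax L (nth i A 0)); set (u := Rmin U (nth (S i) A 0)).
  assert (Hl : L <= l /\ nth i A 0 <= l /\ l <= t0)
    by (unfold l; repeat split; [apply Rmax_l | apply Rmax_r | apply Rmax_lub; lra]).
  assert (Hu : u <= U /\ u <= nth (S i) A 0 /\ t0 <= u)
    by (unfold u; repeat split; [apply Rmin_l | apply Rmin_r | apply Rmin_glb; lra]).
  pose proof (concave_on_min_endpoints h l u t0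
    (concave_on_sub h _ _ l u Hconc ltac:(lra) ltac:(lra)) ltac:(lra)) as Hmin.
  unfold Rmin at 1 in Hmin; destruct (Rle_dec (h l) (h u)).
  - exists l; split; [lra|]; split; [lra|].
    unfold l, Rmax; destruct (Rle_dec L (nth i A 0)); auto.
  - exists u; split; [lra|]; split; [lra|].
    unfold u, Rmin; destruct (Rle_dec U (nth (S i) A 0)); auto.
Qed.

Lemma concave_on_add_convex f a K c l u :
  convex_on f l u -> K <= 0 -> concave_on (fun t => a * t + K * f t + c) l u.
Proof.
  intros Hf HK x y k Hx Hy Hk.
  pose proof (Rmult_le_compat_neg_l K _ _ HK (Hf x y k Hx Hy Hk)).
  nra.
Qed.

Lemma concave_on_add_concave f a K c l u :
  concave_on f l u -> 0 <= K -> concave_on (fun t => a * t + K * f t + c) l u.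
Proof.
  intros Hf HK x y k Hx Hy Hk.
  pose proof (Rmult_le_compat_l K _ _ HK (Hf x y k Hx Hy Hk)).
  nra.
Qed.

Lemma mono01_le f x y : mono01 f -> in01 x -> in01 y -> x <= y -> f x <= f y.
Proof. intros [_ Hf]; apply Hf. Qed.

Section Triangle.

Variables (fp fm fo : R -> R) (Ap Am : list R) (alpha : R).
Hypotheses (fp_mono : mono01 fp) (fp_pw : piecewise_convex fp Ap)
           (fm_mono : mono01 fm) (fm_pw : piecewise_concave fm Am)
           (fo_mono : mono01 fo) (alpha_ge0 : 0 <= alpha).

Definition defect s1 s2 s3 x1 x2 x3 :=
  alpha * LP fp fm fo s1 s2 s3 x1 x2 x3 - ALG fp fm fo s1 s2 s3 x1 x2 x3.

Definition feasible x1 x2 x3 :=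
  in01 x1 /\ in01 x2 /\ in01 x3 /\ tri_ineq x1 x2 x3.

Notation p := (pval fp fm fo).

Lemma pval_in01 s x : in01 x -> in01 (p s x).
Proof. destruct fp_mono, fm_mono, fo_mono; destruct s; simpl; auto. Qed.

Lemma at_breakpoint_1 s : at_breakpoint Ap Am s 1.
Proof. destruct s; simpl; eauto using piecewise_In1. Qed.

(* The other terms of LP and ALG are affine in p_uv = p s1 t. *)
Lemma defect_affine_first s1 s2 s3 x2 x3 : exists K c, forall t,
  defect s1 s2 s3 t x2 x3 = alpha * elp s1 t (p s3 x3) (p s2 x2) + K * p s1 t + c.
Proof.
  set (q2 := p s2 x2); set (q3 := p s3 x3).
  exists (alpha * ((elp s2 x2 1 q3 - elp s2 x2 0 q3) + (elp s3 x3 1 q2 - elp s3 x3 0 q2))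
          - ((ecost s2 1 q3 - ecost s2 0 q3) + (ecost s3 1 q2 - ecost s3 0 q2))),
         (alpha * (elp s2 x2 0 q3 + elp s3 x3 0 q2) - ecost s1 q3 q2
          - (ecost s2 0 q3 + ecost s3 0 q2)).
  intros t; unfold defect, LP, ALG; fold q2 q3.
  destruct s1, s2, s3; simpl; ring.
Qed.

Lemma defect_swap12 s1 s2 s3 x1 x2 x3 :
  defect s1 s2 s3 x1 x2 x3 = defect s2 s1 s3 x2 x1 x3.
Proof. unfold defect, LP, ALG; destruct s1, s2, s3; simpl; ring. Qed.

Lemma defect_swap13 s1 s2 s3 x1 x2 x3 :
  defect s1 s2 s3 x1 x2 x3 = defect s3 s2 s1 x3 x2 x1.
Proof. unfold defect, LP, ALG; destruct s1, s2, s3; simpl; ring. Qed.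

Lemma neg_at_end_or_breakpoint s q1 q2 K c L U t0 :
  in01 q1 -> in01 q2 -> 0 <= L -> L <= t0 <= U -> U <= 1 ->
  alpha * elp s t0 q1 q2 + K * p s t0 + c < 0 ->
  exists t, L <= t <= U /\ alpha * elp s t q1 q2 + K * p s t + c < 0 /\
            (t = L \/ t = U \/ at_breakpoint Ap Am s t).
Proof.
  intros Hq1 Hq2 HL Ht0 HU Hneg; unfold in01 in *.
  assert (Hslope : 0 <= alpha * (1 - q1 * q2)) by (apply Rmult_le_pos; nra).
  destruct s; simpl in *.
  - destruct (Rlt_or_le K 0) as [HK|HK].
    + destruct (piecewise_concave_neg_at_end_or_breakpoint
        (fun t => alpha * (1 - q1 * q2) * t + K * fp t + c) Ap L U t0)
        as [t [Ht [Htneg Hend]]]; auto; [| nra | exists t; split; [lra | split; [nra | auto]]].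
      apply (piecewise_impl convex_on concave_on fp); auto.
      intros l u Hl; apply concave_on_add_convex; [exact Hl | lra].
    + exists L; split; [lra|]; split; [|auto].
      pose proof (mono01_le fp L t0 fp_mono ltac:(split; lra) ltac:(split; lra) ltac:(lra)).
      nra.
  - destruct (Rlt_or_le 0 K) as [HK|HK].
    + destruct (piecewise_concave_neg_at_end_or_breakpoint
        (fun t => - (alpha * (1 - q1 * q2)) * t + K * fm t + (alpha * (1 - q1 * q2) + c))
        Am L U t0) as [t [Ht [Htneg Hend]]];
        auto; [| nra | exists t; split; [lra | split; [nra | auto]]].
      apply (piecewise_impl concave_on concave_on fm); auto.
      intros l u Hl; apply concave_on_add_concave; [exact Hl | lra].
    + exists U; split; [lra|]; split; [|auto].
      pose proof (mono01_le fm t0 U fm_mono ltac:(split; lra) ltac:(split; lra) ltac:(lra)).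
      nra.
  - pose proof (mono01_le fo L t0 fo_mono ltac:(split; lra) ltac:(split; lra) ltac:(lra)).
    pose proof (mono01_le fo t0 U fo_mono ltac:(split; lra) ltac:(split; lra) ltac:(lra)).
    destruct (Rlt_or_le K 0).
    + exists U; split; [lra|]; split; [nra | auto].
    + exists L; split; [lra|]; split; [nra | auto].
Qed.

Lemma improve_first s1 s2 s3 x1 x2 x3 :
  feasible x1 x2 x3 -> defect s1 s2 s3 x1 x2 x3 < 0 ->
  exists t, feasible t x2 x3 /\ defect s1 s2 s3 t x2 x3 < 0 /\
            (tight t x2 x3 \/ at_breakpoint Ap Am s1 t).
Proof.
  intros [H1 [H2 [H3 Htri]]] Hneg.
  destruct (defect_affine_first s1 s2 s3 x2 x3) as [K [c Hd]]; rewrite Hd in Hneg.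
  unfold in01, tri_ineq in *.
  set (L := Rabs (x2 - x3)); set (U := Rmin 1 (x2 + x3)).
  assert (HL : L = x2 - x3 /\ x3 <= x2 \/ L = x3 - x2 /\ x2 <= x3)
    by (unfold L, Rabs; destruct (Rcase_abs _); [right|left]; split; lra).
  assert (HU : U = 1 /\ 1 <= x2 + x3 \/ U = x2 + x3 /\ x2 + x3 <= 1)
    by (unfold U, Rmin; destruct (Rle_dec _ _); [left|right]; split; lra).
  destruct (neg_at_end_or_breakpoint s1 (p s3 x3) (p s2 x2) K c L U x1)
    as [t [Ht [Htneg Hend]]];
    try apply pval_in01; unfold in01; try lra.
  exists t; split; [repeat split; lra|]; split; [rewrite Hd; exact Htneg|].
  unfold tight; destruct Hend as [->|[->|Hbp]]; auto.
  - left; lra.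
  - destruct HU as [[-> _]|[-> _]]; [right; apply at_breakpoint_1 | left; lra].
Qed.

Lemma feasible_swap12 x1 x2 x3 : feasible x1 x2 x3 <-> feasible x2 x1 x3.
Proof. unfold feasible, in01, tri_ineq; split; intros; lra. Qed.

Lemma feasible_swap13 x1 x2 x3 : feasible x1 x2 x3 <-> feasible x3 x2 x1.
Proof. unfold feasible, in01, tri_ineq; split; intros; lra. Qed.

Lemma tight_swap12 x1 x2 x3 : tight x2 x1 x3 -> tight x1 x2 x3.
Proof. unfold tight; intros; lra. Qed.

Lemma tight_swap13 x1 x2 x3 : tight x3 x2 x1 -> tight x1 x2 x3.
Proof. unfold tight; intros; lra. Qed.

Lemma improve_second s1 s2 s3 x1 x2 x3 :
  feasible x1 x2 x3 -> defect s1 s2 s3 x1 x2 x3 < 0 ->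
  exists t, feasible x1 t x3 /\ defect s1 s2 s3 x1 t x3 < 0 /\
            (tight x1 t x3 \/ at_breakpoint Ap Am s2 t).
Proof.
  rewrite feasible_swap12, defect_swap12; intros Hf Hneg.
  destruct (improve_first _ _ _ _ _ _ Hf Hneg) as [t [Hft [Hnt Hend]]].
  exists t; rewrite feasible_swap12, defect_swap12.
  destruct Hend; auto using tight_swap12.
Qed.

Lemma improve_third s1 s2 s3 x1 x2 x3 :
  feasible x1 x2 x3 -> defect s1 s2 s3 x1 x2 x3 < 0 ->
  exists t, feasible x1 x2 t /\ defect s1 s2 s3 x1 x2 t < 0 /\
            (tight x1 x2 t \/ at_breakpoint Ap Am s3 t).
Proof.
  rewrite feasible_swap13, defect_swap13; intros Hf Hneg.
  destruct (improve_first _ _ _ _ _ _ Hf Hneg) as [t [Hft [Hnt Hend]]].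
  exists t; rewrite feasible_swap13, defect_swap13.
  destruct Hend; auto using tight_swap13.
Qed.

End Triangle.

Theorem lemma2 (fp fm fo : R -> R) (Ap Am : list R) (alpha : R)
  (s1 s2 s3 : esign) :
  mono01 fp -> piecewise_convex fp Ap ->
  mono01 fm -> piecewise_concave fm Am ->
  mono01 fo ->
  0 < alpha ->
  (exists y1 y2 y3, in01 y1 /\ in01 y2 /\ in01 y3 /\ tri_ineq y1 y2 y3 /\
     alpha * LP fp fm fo s1 s2 s3 y1 y2 y3 - ALG fp fm fo s1 s2 s3 y1 y2 y3 < 0) ->
  exists x1 x2 x3, in01 x1 /\ in01 x2 /\ in01 x3 /\ tri_ineq x1 x2 x3 /\
     alpha * LP fp fm fo s1 s2 s3 x1 x2 x3 - ALG fp fm fo s1 s2 s3 x1 x2 x3 < 0 /\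
     (tight x1 x2 x3 \/
      (at_breakpoint Ap Am s1 x1 /\ at_breakpoint Ap Am s2 x2 /\
       at_breakpoint Ap Am s3 x3)).
Proof.
  intros Hmp Hpp Hmm Hpm Hmo Ha [y1 [y2 [y3 [H1 [H2 [H3 [Htri Hneg]]]]]]].
  assert (Hy : feasible y1 y2 y3) by exact (conj H1 (conj H2 (conj H3 Htri))).
  fold (defect fp fm fo alpha s1 s2 s3 y1 y2 y3) in Hneg.
  assert (Ha0 : 0 <= alpha) by lra.
  destruct (improve_first fp fm fo Ap Am alpha Hmp Hpp Hmm Hpm Hmo Ha0 _ _ _ _ _ _ Hy Hneg)
    as [x1 [Hf1 [Hn1 [Ht1|Hb1]]]].
  { exists x1, y2, y3; unfold feasible in Hf1; tauto. }
  destruct (improve_second fp fm fo Ap Am alpha Hmp Hpp Hmm Hpm Hmo Ha0 _ _ _ _ _ _ Hf1 Hn1)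
    as [x2 [Hf2 [Hn2 [Ht2|Hb2]]]].
  { exists x1, x2, y3; unfold feasible in Hf2; tauto. }
  destruct (improve_third fp fm fo Ap Am alpha Hmp Hpp Hmm Hpm Hmo Ha0 _ _ _ _ _ _ Hf2 Hn2)
    as [x3 [Hf3 [Hn3 Hend]]].
  exists x1, x2, x3; unfold feasible in Hf3; tauto.
Qed.
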